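(* Let $(K,\succ)$ be an ordered field and $\Gamma=(V,\rho,a_0,B)$ an infinite network over $K$. For $n\in\mathbb N$ let $V_n=\{x\in V:\operatorname{dist}(a_0,x)\le n\}$, $\partial V_n=\{x\in V:\operatorname{dist}(a_0,x)=n\}$, $B_n=B\cap V_n$, and let $\Gamma_n=(V_n,\rho|_{V_n},a_0,B_n\cup\partial V_n)$ be the finite network on the induced subgraph on $V_n$ with the restricted admittances. Then for every $n\in\mathbb N$, $$\mathcal P_{eff}(\Gamma_{n+1})\preceq \mathcal P_{eff}(\Gamma_n).$$
   Context: A network over an ordered field $(K,\succ)$ is $\Gamma=(V,\rho,a_0,B)$: $(V,E)$ a locally finite connected graph with $|V|\ge2$, $\rho:E\to K$ positive (admittance), $a_0\in V$, $B\subseteq V\setminus\{a_0\}$ nonempty; infinite if $|V|=\infty$. Set $\rho_{xy}=0$ if $xy$ is not an edge; $x\sim y$ means $xy$ is an edge; $\operatorname{dist}$ is the graph distance. For a finite network, the Dirichlet problem is: $v:V\to K$ with $\sum_y(v(y)-v(x))\rho_{xy}=0$ for $x\notin B\cup\{a_0\}$, $v=0$ on $B$, $v(a_0)=1$; it has a unique solution. The effective admittance of a finite network is $\mathcal P_{eff}(\Gamma)=\sum_{x\sim a_0}(1-v(x))\rho_{xa_0}$ with $v$ this solution. $\preceq$ denotes the order of $K$. *)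

From HB Require Import structures.
From mathcomp Require Import all_boot all_order all_algebra.
From Stdlib Require Import ClassicalEpsilon.
Set Implicit Arguments. Unset Strict Implicit. Unset Printing Implicit Defensive.
Import Order.TTheory GRing.Theory Num.Theory.
Local Open Scope ring_scope.

(* The graph is given by neighbour lists (local finiteness): y is adjacent
   to x iff y \in nbrs x.  rho is the admittance, extended by 0 off edges. *)
Record network (K : realFieldType) (V : eqType) := Network {
  nbrs : V -> seq V;
  rho : V -> V -> K;
  a0 : V;
  B : pred V;
  nbrs_uniq : forall x, uniq (nbrs x);
  nbrs_sym : forall x y, (y \in nbrs x) = (x \in nbrs y);
  nbrs_irrefl : forall x, x \notin nbrs x;
  rho_sym : forall x y, rho x y = rho y x;
  rho_pos : forall x y, y \in nbrs x -> 0 < rho x y;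
  rho_off : forall x y, y \notin nbrs x -> rho x y = 0;
  connected : forall x y, exists s : seq V, path (fun u w => w \in nbrs u) x s /\ last x s = y;
  B_nonempty : exists b, B b;
  a0_notin_B : ~~ B a0;
}.

Definition infinite_network (K : realFieldType) (V : eqType) (G : network K V) : Prop :=
  ~ exists s : seq V, forall x, x \in s.

(* ball G n x  <=>  dist(a0, x) <= n  (graph distance) *)
Fixpoint ball (K : realFieldType) (V : eqType) (G : network K V) (n : nat) : pred V :=
  match n with
  | 0 => pred1 (a0 G)
  | m.+1 => fun x => ball G m x || has (ball G m) (nbrs G x)
  end.

Definition sphere (K : realFieldType) (V : eqType) (G : network K V) (n : nat) : pred V :=
  fun x => ball G n x && ((n == 0)%N || ~~ ball G n.-1 x).

(* Dirichlet problem on the finite network with vertex set S (induced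
   subgraph, restricted admittances), root a0 and boundary set Bd. *)
Definition is_dirichlet_sol (K : realFieldType) (V : eqType) (G : network K V)
    (S Bd : pred V) (v : V -> K) : Prop :=
  v (a0 G) = 1 /\
  (forall x, S x -> Bd x -> v x = 0) /\
  (forall x, S x -> x != a0 G -> ~~ Bd x ->
     \sum_(y <- nbrs G x | S y) (v y - v x) * rho G x y = 0).

Definition Peff (K : realFieldType) (V : eqType) (G : network K V) (S Bd : pred V) : K :=
  let v := epsilon (inhabits (fun _ : V => (0 : K))) (is_dirichlet_sol G S Bd) in
  \sum_(y <- nbrs G (a0 G) | S y) (1 - v y) * rho G (a0 G) y.

Definition Gamma_bdry (K : realFieldType) (V : eqType) (G : network K V) (n : nat) : pred V :=
  fun x => (B G x && ball G n x) || sphere G n x.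

Definition Peff_n (K : realFieldType) (V : eqType) (G : network K V) (n : nat) : K :=
  Peff G (ball G n) (Gamma_bdry G n).

(* Thomson's principle, in a form valid over any ordered field: if v solves the
   Dirichlet problem and f is admissible (f a0 = 1, f = 0 on the boundary), then
   by Green's identity both the energy of v and the mixed energy of f and v equal
   2 Peff, where the energy of g is the sum of (g x - g y)^2 rho_xy over ordered
   pairs; expanding the nonnegative energy of f - v gives 2 Peff <= energy f.
   Extending the potential of Gamma_n by zero yields an admissible f for
   Gamma_(n+1); since it already vanishes on the sphere of radius n, no edge
   leaving V_n contributes, so its energy is still 2 Peff(Gamma_n).
   The Dirichlet problems are solvable (Peff is defined by a choice), because the
   Laplacian on interior vertices is injective: a harmonic function vanishing
   off the interior has zero energy, hence is constant on the connected ball. *)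

From HB Require Import structures.
From mathcomp Require Import all_boot all_order all_algebra.
From mathcomp Require Import ring lra.
From Stdlib Require Import ClassicalEpsilon.
Set Implicit Arguments. Unset Strict Implicit. Unset Printing Implicit Defensive.
Import Order.TTheory GRing.Theory Num.Theory.
Local Open Scope ring_scope.

Lemma linear_injective_surjective (F : fieldType) n (f : 'rV[F]_n -> 'rV[F]_n) :
  linear f -> (forall c, f c = 0 -> c = 0) -> forall b, exists c, f c = b.
Proof.
move=> f_lin f_inj b.
pose L : {linear 'rV[F]_n -> 'rV[F]_n} := HB.pack f (GRing.isLinear.Build _ _ _ _ f f_lin).
have mulL u : u *m lin1_mx L = f u by rewrite mul_rV_lin1.
have L_unit : lin1_mx L \in unitmx.
  by rewrite -row_free_unit; apply: inj_row_free => u; rewrite mulL; apply: f_inj.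
by exists (b *m invmx (lin1_mx L)); rewrite -mulL mulmxKV.
Qed.

Section Network.

Variables (K : realFieldType) (V : eqType) (G : network K V).

Lemma rho_ge0 x y : 0 <= rho G x y.
Proof.
by case: (boolP (y \in nbrs G x)) => [/rho_pos/ltW | /rho_off ->].
Qed.

Definition a0_current (S : pred V) (v : V -> K) :=
  \sum_(y <- nbrs G (a0 G) | S y) (1 - v y) * rho G (a0 G) y.

Lemma Peff_sol S Bd : (exists v, is_dirichlet_sol G S Bd v) ->
  exists2 v, is_dirichlet_sol G S Bd v & Peff G S Bd = a0_current S v.
Proof.
by move=> sol_ex; exists (epsilon (inhabits (fun=> 0)) (is_dirichlet_sol G S Bd));
  first exact: epsilon_spec.
Qed.

Section DirichletForm.

Variables (t : seq V) (S : pred V).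

(* [S] is a predicate on a possibly infinite type; sums over it run through a
   list [t] enumerating it once (hypotheses [t_uniq] and [t_S] below). *)
Definition laplacian (g : V -> K) x := \sum_(y <- t | S y) (g y - g x) * rho G x y.

Definition dirichlet_form (f g : V -> K) :=
  \sum_(x <- t | S x) \sum_(y <- t | S y) (f x - f y) * (g x - g y) * rho G x y.

Lemma laplacianD f g x :
  laplacian (fun y => f y + g y) x = laplacian f x + laplacian g x.
Proof. by rewrite /laplacian -big_split; apply: eq_bigr => y _ /=; ring. Qed.

Lemma laplacianZ a f x : laplacian (fun y => a * f y) x = a * laplacian f x.
Proof. by rewrite /laplacian mulr_sumr; apply: eq_bigr => y _; ring. Qed.

Lemma dirichlet_form_laplacian f g :
  dirichlet_form f g = - 2%:R * \sum_(x <- t | S x) f x * laplacian g x.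
Proof.
pose T := \sum_(x <- t | S x) \sum_(y <- t | S y) f x * (g y - g x) * rho G x y.
have T_sym : T = \sum_(x <- t | S x) \sum_(y <- t | S y) f y * (g x - g y) * rho G x y.
  rewrite /T exchange_big; apply: eq_bigr => x _; apply: eq_bigr => y _.
  by rewrite rho_sym.
have -> : \sum_(x <- t | S x) f x * laplacian g x = T.
  by apply: eq_bigr => x _; rewrite mulr_sumr; apply: eq_bigr => y _; rewrite mulrA.
rewrite mulNr mulr2n mulrDl mul1r {1}T_sym /T -big_split -sumrN; apply: eq_bigr => x _.
by rewrite -big_split -sumrN; apply: eq_bigr => y _ /=; ring.
Qed.

Lemma dirichlet_form_ge0 f : 0 <= dirichlet_form f f.
Proof.
apply: sumr_ge0 => x _; apply: sumr_ge0 => y _.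
by rewrite mulr_ge0 ?rho_ge0 // -expr2 sqr_ge0.
Qed.

Lemma dirichlet_form_sub f g :
  dirichlet_form (fun x => f x - g x) (fun x => f x - g x) =
  dirichlet_form f f - 2%:R * dirichlet_form f g + dirichlet_form g g.
Proof.
rewrite /dirichlet_form mulr_sumr -sumrB -big_split; apply: eq_bigr => x _ /=.
rewrite mulr_sumr -sumrB -big_split; apply: eq_bigr => y _ /=.
ring.
Qed.

Hypotheses (t_uniq : uniq t) (t_S : forall x, S x -> x \in t).

Lemma dirichlet_form_eq0 f : dirichlet_form f f = 0 ->
  forall x y, S x -> S y -> y \in nbrs G x -> f x = f y.
Proof.
have term_ge0 x y : 0 <= (f x - f y) * (f x - f y) * rho G x y.
  by rewrite mulr_ge0 ?rho_ge0 // -expr2 sqr_ge0.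
move=> /eqP; rewrite psumr_eq0 => [/allP f_eq0 x y Sx Sy yx|x _]; last first.
  by apply: sumr_ge0 => y _.
move: (f_eq0 x (t_S Sx)); rewrite Sx psumr_eq0 // => /allP /(_ y (t_S Sy)).
by rewrite Sy !mulf_eq0 (gt_eqF (rho_pos yx)) orbF orbb subr_eq0 => /eqP.
Qed.

Lemma sum_nbrs_seq x F :
  \sum_(y <- nbrs G x | S y) F y * rho G x y = \sum_(y <- t | S y) F y * rho G x y.
Proof.
have -> : \sum_(y <- t | S y) F y * rho G x y =
    \sum_(y <- t | S y && (y \in nbrs G x)) F y * rho G x y.
  rewrite [LHS]big_mkcond [RHS]big_mkcond; apply: eq_bigr => y _.
  by case: (S y); case: (boolP (y \in nbrs G x)) => // /rho_off ->; rewrite mulr0.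
rewrite -[LHS]big_filter -[RHS]big_filter; apply/perm_big/uniq_perm.
- exact/filter_uniq/nbrs_uniq.
- exact: filter_uniq.
move=> y; rewrite !mem_filter.
by case: (boolP (S y)) => //= /t_S ->; rewrite andbT.
Qed.

Section Dirichlet.

Variable Bd : pred V.
Hypothesis S_a0 : S (a0 G).

Lemma laplacian_dirichlet_sol v : is_dirichlet_sol G S Bd v ->
  forall x, S x -> x != a0 G -> ~~ Bd x -> laplacian v x = 0.
Proof.
by move=> [_ [_ v_harm]] x Sx xa Bx; rewrite /laplacian -sum_nbrs_seq v_harm.
Qed.

Lemma a0_current_laplacian v : is_dirichlet_sol G S Bd v ->
  a0_current S v = - laplacian v (a0 G).
Proof.
move=> [v_a0 _]; rewrite /a0_current sum_nbrs_seq -sumrN.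
by apply: eq_bigr => y _; rewrite v_a0 -mulNr opprB.
Qed.

Lemma dirichlet_form_sol f v : is_dirichlet_sol G S Bd v ->
  f (a0 G) = 1 -> (forall x, S x -> Bd x -> f x = 0) ->
  dirichlet_form f v = 2%:R * a0_current S v.
Proof.
move=> sol f_a0 f_Bd; rewrite dirichlet_form_laplacian (a0_current_laplacian sol).
rewrite mulrN mulNr big_mkcond (bigD1_seq (a0 G)) ?t_S //= S_a0 f_a0 mul1r.
rewrite big1 ?addr0 // => x xa; case Sx: (S x) => //.
case Bx: (Bd x); first by rewrite f_Bd ?mul0r.
by rewrite (laplacian_dirichlet_sol sol) ?Bx ?mulr0.
Qed.

Lemma dirichlet_principle f v : is_dirichlet_sol G S Bd v ->
  f (a0 G) = 1 -> (forall x, S x -> Bd x -> f x = 0) ->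
  2%:R * a0_current S v <= dirichlet_form f f.
Proof.
move=> sol f_a0 f_Bd; have [v_a0 [v_Bd _]] := sol.
have := dirichlet_form_ge0 (fun x => f x - v x).
rewrite dirichlet_form_sub (dirichlet_form_sol sol f_a0 f_Bd).
rewrite (dirichlet_form_sol sol v_a0 v_Bd).
lra.
Qed.

Hypothesis Bd_a0 : ~~ Bd (a0 G).
Hypothesis S_connected : forall w : V -> K,
  (forall x y, S x -> S y -> y \in nbrs G x -> w x = w y) ->
  forall x, S x -> w x = w (a0 G).

Definition interior := [seq x <- t | S x && (x != a0 G) && ~~ Bd x].

Local Notation m := (size interior).

Lemma a0_notin_interior : a0 G \notin interior.
Proof. by rewrite mem_filter eqxx andbF. Qed.

Lemma interior_nth x : x \in interior -> exists i : 'I_m, x = nth (a0 G) interior i.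
Proof.
by move=> xI; exists (Ordinal (etrans (index_mem _ _) xI)); rewrite nth_index.
Qed.

Definition extension (c : 'rV[K]_m) x :=
  \sum_(j < m) (nth (a0 G) interior j == x)%:R * c 0 j.

Lemma extension_nth c (i : 'I_m) : extension c (nth (a0 G) interior i) = c 0 i.
Proof.
rewrite /extension (bigD1 i) //= eqxx mul1r big1 ?addr0 // => j ji.
by rewrite nth_uniq ?filter_uniq // val_eqE (negbTE ji) mul0r.
Qed.

Lemma extension_notin c x : x \notin interior -> extension c x = 0.
Proof.
move=> xI; rewrite /extension big1 // => j _.
by rewrite (_ : _ == x = false) ?mul0r //; apply: contraNF xI => /eqP <-; apply: mem_nth.
Qed.

Definition interior_laplacian (c : 'rV[K]_m) : 'rV[K]_m :=
  \row_i laplacian (extension c) (nth (a0 G) interior i).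

Lemma interior_laplacian_linear : linear interior_laplacian.
Proof.
move=> a c d; have ext_lin x : extension (a *: c + d) x = a * extension c x + extension d x.
  by rewrite /extension mulr_sumr -big_split; apply: eq_bigr => j _ /=; rewrite !mxE; ring.
apply/rowP => i; rewrite !mxE -laplacianZ -laplacianD.
by apply: eq_bigr => y _; rewrite !ext_lin.
Qed.

Lemma interior_laplacian_inj c : interior_laplacian c = 0 -> c = 0.
Proof.
move=> Lc0; set w := extension c.
have w_lap x : S x -> w x * laplacian w x = 0.
  move=> Sx; case: (boolP (x \in interior)) => [/interior_nth [i ->] | xI].
    by have := congr1 (fun r : 'rV[K]_m => r 0 i) Lc0; rewrite !mxE => ->; rewrite mulr0.
  by rewrite /w extension_notin ?mul0r.
have w_energy : dirichlet_form w w = 0.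
  by rewrite dirichlet_form_laplacian big1 ?mulr0.
have w_a0 : w (a0 G) = 0 by rewrite /w extension_notin ?a0_notin_interior.
apply/rowP => i; rewrite mxE -extension_nth -/w.
rewrite (S_connected (dirichlet_form_eq0 w_energy)) ?w_a0 //.
by have := mem_nth (a0 G) (ltn_ord i); rewrite mem_filter => /andP [/andP [/andP []]].
Qed.

Lemma laplacian_indicator_a0 x : x != a0 G ->
  laplacian (fun y => (y == a0 G)%:R) x = rho G x (a0 G).
Proof.
move=> /negbTE xa; rewrite /laplacian xa big_mkcond (bigD1_seq (a0 G)) ?t_S //=.
rewrite S_a0 eqxx subr0 mul1r big1 ?addr0 // => y /negbTE ->.
by case: (S y); rewrite ?subr0 ?mul0r.
Qed.

Lemma dirichlet_sol_exists : exists v, is_dirichlet_sol G S Bd v.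
Proof.
have [c Lc] := linear_injective_surjective interior_laplacian_linear
  interior_laplacian_inj (\row_i - rho G (nth (a0 G) interior i) (a0 G)).
exists (fun x => extension c x + (x == a0 G)%:R); split; [|split].
- by rewrite extension_notin ?a0_notin_interior // eqxx add0r.
- move=> x Sx Bx; have xa : x != a0 G by apply: contraTneq Bx => ->.
  by rewrite extension_notin ?(negbTE xa) ?addr0 // mem_filter Bx andbF.
move=> x Sx xa Bx.
rewrite (sum_nbrs_seq x (fun y => _ - _)) -/(laplacian _ x) laplacianD.
have /interior_nth [i xi] : x \in interior by rewrite mem_filter Sx xa Bx t_S.
rewrite laplacian_indicator_a0 // xi.
by have := congr1 (fun r : 'rV[K]_m => r 0 i) Lc; rewrite !mxE => ->; rewrite addNr.
Qed.

End Dirichlet.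

End DirichletForm.

Lemma dirichlet_form_zero_extension t (S S' : pred V) u :
  (forall x, S x -> S' x) ->
  (forall x y, S x -> ~~ S y -> y \in nbrs G x -> u x = 0) ->
  let f x := if S x then u x else 0 in
  dirichlet_form t S' f f = dirichlet_form t S u u.
Proof.
move=> S_S' u_exit f.
have exit0 x y : S x -> ~~ S y -> u x * rho G x y = 0.
  move=> Sx Sy; case: (boolP (y \in nbrs G x)) => [yx | /rho_off ->].
    by rewrite (u_exit x y) ?mul0r.
  by rewrite mulr0.
have full_sum (P : pred V) g : dirichlet_form t P g g =
    \sum_(x <- t) \sum_(y <- t) (if P x && P y then (g x - g y) * (g x - g y) * rho G x y else 0).
  rewrite /dirichlet_form big_mkcond; apply: eq_bigr => x _.
  by case: (P x); rewrite ?big_mkcond // big1.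
rewrite !full_sum; apply: eq_bigr => x _; apply: eq_bigr => y _.
rewrite /f; case Sx: (S x); case Sy: (S y) => /=.
- by rewrite !S_S'.
- by case: ifP => // _; rewrite subr0 -mulrA exit0 ?Sy ?mulr0.
- by case: ifP => // _; rewrite sub0r mulrNN rho_sym -mulrA exit0 ?Sx ?mulr0.
- by case: ifP => // _; rewrite subrr !mul0r.
Qed.

Lemma ball_a0 n : ball G n (a0 G).
Proof. by elim: n => [|n IH] /=; rewrite ?eqxx ?IH. Qed.

Lemma ball_le m n x : (m <= n)%N -> ball G m x -> ball G n x.
Proof.
elim: n => [|n IH]; first by rewrite leqn0 => /eqP ->.
by rewrite leq_eqVlt ltnS => /predU1P [-> // | /IH mn /mn /= ->].
Qed.

Lemma ball_finite n : exists2 t : seq V, uniq t & forall x, ball G n x -> x \in t.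
Proof.
suff [t ball_t] : exists t : seq V, forall x, ball G n x -> x \in t.
  by exists (undup t) => [|x /ball_t]; rewrite ?undup_uniq ?mem_undup.
elim: n => [|n [t ball_t]]; first by exists [:: a0 G] => x /= /eqP ->; rewrite inE.
exists (t ++ flatten (map (nbrs G) t)) => x /= /orP [/ball_t xt | /hasP [y yx /ball_t yt]].
  by rewrite mem_cat xt.
by rewrite mem_cat; apply/orP; right; apply/flatten_mapP; exists y; rewrite // nbrs_sym.
Qed.

Lemma ball_connected n (w : V -> K) :
  (forall x y, ball G n x -> ball G n y -> y \in nbrs G x -> w x = w y) ->
  forall x, ball G n x -> w x = w (a0 G).
Proof.
move=> w_const; suff w_ball m : (m <= n)%N -> forall x, ball G m x -> w x = w (a0 G).
  exact: w_ball.
elim: m => [_ x /eqP -> // | m IH lt_mn x /= /orP [/(IH (ltnW lt_mn)) // | /hasP [y yx bmy]]].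
have bnx : ball G n x by apply: (ball_le lt_mn) => /=; apply/orP; right; apply/hasP; exists y.
by rewrite (w_const x y) ?(IH (ltnW lt_mn) y) ?(ball_le (ltnW lt_mn) bmy).
Qed.

Lemma a0_notin_Gamma_bdry n : (0 < n)%N -> ~~ Gamma_bdry G n (a0 G).
Proof.
case: n => // n _; rewrite /Gamma_bdry /sphere (negbTE (a0_notin_B G)) /=.
by rewrite ball_a0 andbF.
Qed.

Lemma Gamma_bdry_exit n x y : (0 < n)%N -> ball G n x -> ~~ ball G n y ->
  y \in nbrs G x -> Gamma_bdry G n x.
Proof.
case: n => // n _ bx by_ yx; rewrite /Gamma_bdry /sphere bx /=; apply/orP; right.
by apply: contra by_ => bnx /=; apply/orP; right; apply/hasP; exists x; rewrite // nbrs_sym.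
Qed.

Lemma Gamma_bdryS n x : ball G n x -> Gamma_bdry G n.+1 x -> Gamma_bdry G n x.
Proof. by rewrite /Gamma_bdry /sphere /= => ->; rewrite andbF orbF !andbT => ->. Qed.

Lemma Peff_n_sol n : (0 < n)%N ->
  exists2 v, is_dirichlet_sol G (ball G n) (Gamma_bdry G n) v &
             Peff_n G n = a0_current (ball G n) v.
Proof.
move=> n_pos; apply: Peff_sol; have [t t_uniq t_ball] := ball_finite n.
exact: (dirichlet_sol_exists t_uniq t_ball (ball_a0 n)
          (a0_notin_Gamma_bdry n_pos) (@ball_connected n)).
Qed.

End Network.

Theorem mainTheorem7 (K : realFieldType) (V : eqType) (G : network K V)
    (Ginf : infinite_network G) (n : nat) (n_pos : (0 < n)%N) :
  Peff_n G n.+1 <= Peff_n G n.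
Proof.
have [u sol_u ->] := Peff_n_sol G n_pos.
have [w sol_w ->] := Peff_n_sol G (ltn0Sn n).
have [t t_uniq t_ball] := ball_finite G n.+1.
have t_ball_n x : ball G n x -> x \in t by move/(ball_le (leqnSn n)); apply: t_ball.
have [u_a0 [u_bdry _]] := sol_u.
have u_exit x y : ball G n x -> ~~ ball G n y -> y \in nbrs G x -> u x = 0.
  by move=> bx by_ yx; rewrite u_bdry // (Gamma_bdry_exit n_pos bx by_ yx).
rewrite -(ler_pM2l (ltr0Sn K 1)) -(dirichlet_form_sol t_uniq t_ball_n (ball_a0 G n) sol_u u_a0 u_bdry).
rewrite -(dirichlet_form_zero_extension t (fun x => ball_le (leqnSn n)) u_exit).
apply: (dirichlet_principle t_uniq t_ball (ball_a0 G n.+1) sol_w) => /= [|x _].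
  by rewrite ball_a0.
by case bx: (ball G n x) => // /(Gamma_bdryS bx); apply: u_bdry.
Qed.
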